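(* Let $t$ be a positive integer, let $n$ be sufficiently large compared to $t$, and let $G$ be an $n$-vertex graph with $e(G)\ge 5t^{3/2}n^{3/2}$. Then $G$ contains a non-empty $t^2$-rich collection of paths of length $2t-2$.
   Context: A path of length $2t-2$ has $2t-1$ vertices. For $\alpha>0$ and $k\in\mathbb{N}$, a collection $\mathcal{P}$ of labelled paths $x_1x_2\cdots x_k$ (distinct vertices) in $G$ is $\alpha$-rich if for every $x_1\cdots x_k\in\mathcal{P}$ and every $2\le i\le k-1$ there exist at least $\alpha$ distinct vertices $x_i'$ with $x_1\cdots x_{i-1}x_i'x_{i+1}\cdots x_k\in\mathcal{P}$. *)

From mathcomp Require Import all_boot.
Set Implicit Arguments. Unset Strict Implicit. Unset Printing Implicit Defensive.

(* Simple graph: vertex set a finType T, adjacency e : rel T, assumed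
   symmetric and irreflexive in the theorem. *)

(* Number of edges e(G): ordered adjacent pairs counted once per unordered pair. *)
Definition num_edges (T : finType) (e : rel T) : nat :=
  #|[set p : T * T | e p.1 p.2]| %/ 2.

(* A labelled path x_0 x_1 ... x_{k-1} (k vertices) as a function 'I_k -> T:
   distinct vertices, consecutive ones adjacent. *)
Definition is_gpath (T : finType) (e : rel T) (k : nat) (p : {ffun 'I_k -> T}) : bool :=
  injectiveb p &&
  [forall i : 'I_k, forall j : 'I_k, (nat_of_ord j == (nat_of_ord i).+1) ==> e (p i) (p j)].

Definition replace_at (T : finType) (k : nat) (p : {ffun 'I_k -> T}) (i : 'I_k) (v : T)
  : {ffun 'I_k -> T} := [ffun j => if j == i then v else p j].

(* alpha-rich: for every path in P and every interior position (1-indexed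
   2 <= i <= k-1, i.e. 0-indexed 1 <= i <= k-2) there are at least alpha
   distinct vertices v such that replacing x_i by v stays in P. *)
Definition rich (T : finType) (k : nat) (alpha : nat) (P : {set {ffun 'I_k -> T}}) : Prop :=
  forall p, p \in P -> forall i : 'I_k, 1 <= nat_of_ord i -> (nat_of_ord i).+2 <= k ->
    alpha <= #|[set v : T | replace_at p i v \in P]|.

From mathcomp Require Import all_boot all_order all_algebra.
From mathcomp Require Import ring lra zify.
Set Implicit Arguments. Unset Strict Implicit. Unset Printing Implicit Defensive.
Import Order.TTheory GRing.Theory Num.Theory.

(* Let G have n vertices and m >= 5 t^(3/2) n^(3/2) edges, and put l = 2t - 2
   and D = m / n.  The proof follows the weighted deletion argument.

   1. Dense core: G contains a nonempty vertex set S inducing a subgraph of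
      minimum degree at least D (maximize "edges inside A" + (2D - 1)(n - |A|)).
   2. Random-walk weights: a walk x_0 ... x_l in S gets weight prod_{0<j<l}
      1/deg(x_j).  By a transfer-matrix computation the total weight is
      E = sum_{x in S} deg x; closed walks weigh at most E/D, and for each
      interior position i the walks with a hole at i weigh at most |S| E / D.
   3. Deletion: while the family is not beta-rich, delete a class of fewer than
      beta walks agreeing off an interior position.  The deleted weight is
      bounded by a budget of (l+1)(beta-1)|S| E / D^2, which is less than the
      weight (1 - 1/D) E of the walks with distinct endpoints, so a nonempty
      beta-rich family of such walks survives.
   4. Paths: in a beta-rich family an interior entry can always be replaced by
      a value avoiding the other l entries, which yields a walk without
      repetitions and shows that the paths form a (beta - l)-rich family.
   With beta = t^2 + l + 1 the numerical condition of step 3 is exactly what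
   the density hypothesis gives, and the theorem follows; t = 1 is trivial. *)

Section WalkWeights.
Local Open Scope ring_scope.

Lemma sum_tuple_cons (T : finType) l (F : l.+1.-tuple T -> rat) :
  \sum_(s : l.+1.-tuple T) F s = \sum_(x : T) \sum_(s : l.-tuple T) F [tuple of x :: s].
Proof.
rewrite pair_bigA /=.
rewrite (reindex (fun p : T * l.-tuple T => [tuple of p.1 :: p.2])) /=; last first.
  exists (fun s : l.+1.-tuple T => (thead s, [tuple of behead s])) => [[x s] _|s _] /=.
    by congr pair; apply: val_inj.
  by rewrite [RHS]tuple_eta.
by apply: eq_bigr => -[x s].
Qed.

Definition walk_weight (T : Type) (x0 : T) (Phi : nat -> T -> rat)
  (Psi : nat -> T -> T -> rat) (o : nat) (s : seq T) : rat :=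
  (\prod_(0 <= j < size s) Phi (o + j)%N (nth x0 s j)) *
  \prod_(0 <= j < (size s).-1) Psi (o + j)%N (nth x0 s j) (nth x0 s j.+1).

Fixpoint transfer (T : finType) (Phi : nat -> T -> rat) (Psi : nat -> T -> T -> rat)
  (o l : nat) (x : T) : rat :=
  match l with
  | 0 => Phi o x
  | l'.+1 => Phi o x * \sum_(y : T) Psi o x y * transfer Phi Psi o.+1 l' y
  end.

Lemma walk_weight_single (T : Type) x0 Phi Psi o (x : T) :
  walk_weight x0 Phi Psi o [:: x] = Phi o x.
Proof. by rewrite /walk_weight /= !big_nat1 big_geq // mulr1 addn0. Qed.

Lemma walk_weight_cons2 (T : Type) x0 Phi Psi o (x y : T) s :
  walk_weight x0 Phi Psi o [:: x, y & s] =
  Phi o x * Psi o x y * walk_weight x0 Phi Psi o.+1 (y :: s).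
Proof.
rewrite /walk_weight /= big_nat_recl // [in X in _ * X]big_nat_recl //= !addn0.
rewrite -!mulrA; congr (_ * _); rewrite mulrCA; congr (_ * _).
by congr (_ * _); apply: eq_bigr => j _; rewrite addnS addSn.
Qed.

Lemma walk_weight_ge0 (T : Type) (x0 : T) Phi Psi o (s : seq T) :
  (forall j x, 0 <= Phi j x) -> (forall j x y, 0 <= Psi j x y) ->
  0 <= walk_weight x0 Phi Psi o s.
Proof.
move=> Phi0 Psi0; rewrite /walk_weight.
by apply: mulr_ge0; apply: prodr_ge0 => j _; [exact: Phi0 | exact: Psi0].
Qed.

Lemma transfer_ge0 (T : finType) Phi Psi :
  (forall j x, 0 <= Phi j x) -> (forall j x y, 0 <= Psi j x y) ->
  forall l o (x : T), 0 <= transfer Phi Psi o l x.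
Proof.
move=> Phi0 Psi0; elim=> [|l IH] o x /=; first exact: Phi0.
by apply: mulr_ge0 => //; apply: sumr_ge0 => y _; exact: mulr_ge0.
Qed.

Lemma sum_walk_weight_from (T : finType) x0 l : forall Phi Psi o (x : T),
  \sum_(s : l.-tuple T) walk_weight x0 Phi Psi o (x :: s) = transfer Phi Psi o l x.
Proof.
elim: l => [|l IH] Phi Psi o x /=.
  rewrite (eq_bigr (fun _ => Phi o x)); last by move=> s _; rewrite tuple0 walk_weight_single.
  by rewrite sumr_const card_tuple expn0.
rewrite sum_tuple_cons mulr_sumr; apply: eq_bigr => y _.
rewrite -IH mulr_sumr mulr_sumr; apply: eq_bigr => s _ /=.
by rewrite walk_weight_cons2 mulrA.
Qed.

Lemma sum_walk_weight (T : finType) Phi Psi (x0 : T) l :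
  \sum_(s : l.+1.-tuple T) walk_weight x0 Phi Psi 0 s = \sum_x transfer Phi Psi 0 l x.
Proof.
by rewrite sum_tuple_cons; apply: eq_bigr => x _; rewrite sum_walk_weight_from.
Qed.

End WalkWeights.

(* The random-walk weighting of a graph restricted to a vertex set S: a walk
   with l steps gets weight 1/deg(x) at each interior vertex x and weight 1 at
   its endpoints, so that on a subgraph of positive minimum degree the walks
   leaving a fixed vertex behave like a probability distribution. *)
Section GraphWeights.
Local Open Scope ring_scope.
Variables (T : finType) (S : {set T}) (e : rel T).

Definition deg (x : T) : nat := #|[set y in S | e x y]|.

Definition pos_weight (l j : nat) (x : T) : rat :=
  if x \in S then (if (0 < j < l)%N then (deg x)%:R^-1 else 1) else 0.

Definition edge_weight (j : nat) (x y : T) : rat := (e x y)%:R.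

Definition degree_mass : rat := \sum_x (x \in S)%:R * (deg x)%:R.

Lemma pos_weight_ge0 l j x : 0 <= pos_weight l j x.
Proof.
by rewrite /pos_weight; case: (x \in S) => //; case: ifP => // _; rewrite invr_ge0 ler0n.
Qed.

Lemma edge_weight_ge0 j x y : 0 <= edge_weight j x y.
Proof. by rewrite /edge_weight ler0n. Qed.

Lemma pos_weight_start l x : pos_weight l 0 x = (x \in S)%:R.
Proof. by rewrite /pos_weight; case: (x \in S). Qed.

Lemma sum_indicator : \sum_y (y \in S)%:R = #|S|%:R :> rat.
Proof.
rewrite -sum1_card natr_sum [RHS]big_mkcond /=.
by apply: eq_bigr => y _; case: (y \in S).
Qed.

Lemma sum_edge_weight j x : \sum_y edge_weight j x y * (y \in S)%:R = (deg x)%:R.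
Proof.
rewrite /deg -sum1_card natr_sum [RHS]big_mkcond /=; apply: eq_bigr => y _.
by rewrite /edge_weight inE; case: (y \in S); case: (e x y); rewrite ?mulr1 ?mulr0.
Qed.

Lemma sum_edge_weight_le j x (f : T -> rat) c :
  (forall y, 0 <= f y) -> (forall y, f y <= c * (y \in S)%:R) ->
  \sum_y edge_weight j x y * f y <= c * (deg x)%:R.
Proof.
move=> f0 fc; rewrite -(sum_edge_weight j) mulr_sumr; apply: ler_sum => y _.
by rewrite mulrCA; apply: ler_wpM2l; [exact: edge_weight_ge0 | exact: fc].
Qed.

Variable D : nat.
Hypothesis D_gt0 : (0 < D)%N.
Hypothesis min_deg : forall x, x \in S -> (D <= deg x)%N.

Lemma deg_neq0 x : x \in S -> (deg x)%:R != 0 :> rat.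
Proof. by move=> xS; rewrite pnatr_eq0 -lt0n (leq_trans D_gt0 (min_deg xS)). Qed.

Lemma pos_weight_interior l j x : (0 < j < l)%N ->
  pos_weight l j x * (deg x)%:R = (x \in S)%:R.
Proof.
move=> jl; rewrite /pos_weight jl; case xS: (x \in S); last by rewrite mul0r.
by rewrite mulVf // deg_neq0.
Qed.

Lemma pos_weight_interior_le l j x : (0 < j < l)%N ->
  pos_weight l j x <= D%:R^-1 * (x \in S)%:R.
Proof.
move=> jl; rewrite /pos_weight jl; case xS: (x \in S); last by rewrite mulr0.
rewrite mulr1 lef_pV2 ?ler_nat ?min_deg // posrE ltr0n //.
exact: leq_trans D_gt0 (min_deg xS).
Qed.

Lemma deg_ratio_ge1 x : x \in S -> 1 <= D%:R^-1 * (deg x)%:R :> rat.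
Proof.
move=> xS; have Dp : 0 < D%:R :> rat by rewrite ltr0n.
by rewrite ler_pdivlMl // mulr1 ler_nat min_deg.
Qed.

(* Once past the first vertex, the random-walk weights are a probability
   distribution: the remaining walks from x have total weight [x \in S].  This
   is stated for any weights agreeing with ours from position m on. *)
Lemma transfer_suffix l Phi Psi m :
  (forall j x, (m <= j)%N -> Phi j x = pos_weight l j x) ->
  (forall j x y, (m <= j)%N -> Psi j x y = edge_weight j x y) ->
  forall lr o x, (1 <= o)%N -> (m <= o)%N -> (o + lr = l)%N ->
  transfer Phi Psi o lr x = (x \in S)%:R.
Proof.
move=> HPhi HPsi; elim=> [|lr IH] o x o1 mo ol /=.
  rewrite HPhi // /pos_weight; case: (x \in S) => //; rewrite addn0 in ol.
  by rewrite ol ltnn andbF.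
rewrite HPhi // (eq_bigr (fun y => edge_weight o x y * (y \in S)%:R)); last first.
  by move=> y _; rewrite HPsi // IH // ?(leq_trans mo) // addSnnS.
by rewrite sum_edge_weight pos_weight_interior //; apply/andP; split; lia.
Qed.

Lemma transfer_from_start l x : (0 < l)%N ->
  transfer (pos_weight l) edge_weight 0 l x = (x \in S)%:R * (deg x)%:R.
Proof.
case: l => [|l] // _ /=; rewrite pos_weight_start; congr (_ * _).
rewrite -(sum_edge_weight 0 x); apply: eq_bigr => y _; congr (_ * _).
by apply: (transfer_suffix (m := 0)) => //; lia.
Qed.

End GraphWeights.

Section WeightBounds.
Local Open Scope ring_scope.
Variables (T : finType) (S : {set T}) (e : rel T) (D : nat).
Hypothesis D_gt0 : (0 < D)%N.
Hypothesis min_deg : forall x, x \in S -> (D <= deg S e x)%N.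

Definition endpoint_weight (l : nat) (a : T) (j : nat) (x : T) : rat :=
  pos_weight S e l j x * (if (j == 0)%N || (j == l) then (x == a)%:R else 1).

Lemma endpoint_weight_ge0 l a j x : 0 <= endpoint_weight l a j x.
Proof.
by rewrite /endpoint_weight; apply: mulr_ge0; [exact: pos_weight_ge0 | case: ifP].
Qed.

(* Walks from an interior position o that must end at a: the last step hits a
   single vertex, which costs a factor 1/D. *)
Lemma transfer_to_endpoint l a :
  forall lr o x, (1 <= o)%N -> (1 <= lr)%N -> (o + lr = l)%N ->
  transfer (endpoint_weight l a) (edge_weight e) o lr x <= D%:R^-1 * (x \in S)%:R.
Proof.
elim=> [|lr IH] o x o1 lr1 ol //.
have ol' : (0 < o < l)%N by apply/andP; split; lia.
have Eo : endpoint_weight l a o x = pos_weight S e l o x.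
  by rewrite /endpoint_weight ifF ?mulr1 //; apply/negbTE; lia.
case: lr IH lr1 ol => [|lr] IH _ ol /=; rewrite Eo.
  apply: le_trans (pos_weight_interior_le D_gt0 min_deg x ol').
  rewrite -[X in _ <= X]mulr1; apply: ler_wpM2l; first exact: pos_weight_ge0.
  rewrite (bigD1 a) //= big1 ?addr0; last first.
    move=> y /negbTE ya; rewrite /endpoint_weight (_ : o.+1 == l); last by apply/eqP; lia.
    by rewrite orbT ya !mulr0.
  rewrite /edge_weight /endpoint_weight /pos_weight (_ : o.+1 == l); last by apply/eqP; lia.
  rewrite orbT eqxx (_ : (o.+1 < l)%N = false); last by apply/negbTE; lia.
  by case: (a \in S); case: (e x a); rewrite /= ?mul0r ?mulr0 ?mulr1.
apply: le_trans (_ : pos_weight S e l o x * (D%:R^-1 * (deg S e x)%:R) <= _).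
  apply: ler_wpM2l; first exact: pos_weight_ge0.
  apply: sum_edge_weight_le => y.
    exact: (transfer_ge0 (@endpoint_weight_ge0 l a) (@edge_weight_ge0 T e) lr.+1 o.+1 y).
  by apply: IH; lia.
by rewrite mulrCA (pos_weight_interior D_gt0 min_deg).
Qed.

Lemma transfer_closed l a : (1 < l)%N ->
  \sum_x transfer (endpoint_weight l a) (edge_weight e) 0 l x <=
  D%:R^-1 * ((a \in S)%:R * (deg S e a)%:R).
Proof.
case: l => [|l] // l1 /=.
apply: le_trans (_ : \sum_x endpoint_weight l.+1 a 0 x *
                     (D%:R^-1 * (deg S e x)%:R) <= _).
  apply: ler_sum => x _; apply: ler_wpM2l; first exact: endpoint_weight_ge0.
  apply: sum_edge_weight_le => y.
    exact: (transfer_ge0 (@endpoint_weight_ge0 l.+1 a) (@edge_weight_ge0 T e)).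
  by apply: transfer_to_endpoint; lia.
rewrite (bigD1 a) //= big1 ?addr0.
  by rewrite /endpoint_weight pos_weight_start /= eqxx mulr1 mulrCA.
by move=> x /negbTE xa; rewrite /endpoint_weight eq_refl /= xa mulr0 mul0r.
Qed.

Lemma prod_pick (F : nat -> rat) n i : (i < n)%N ->
  \prod_(0 <= j < n) F j = F i * \prod_(0 <= j < n) (if j == i then 1 else F j).
Proof.
move=> ilt; rewrite !big_mkord (bigD1 (Ordinal ilt)) //=.
rewrite [X in _ = _ * X](bigD1 (Ordinal ilt)) //= eqxx mul1r.
by congr (_ * _); apply: eq_bigr => j /negbTE ji; rewrite -val_eqE /= in ji; rewrite ji.
Qed.

Lemma walk_weight_endpoint (x0 a : T) l (s : l.+1.-tuple T) : (0 < l)%N ->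
  walk_weight x0 (endpoint_weight l a) (edge_weight e) 0 s =
  (nth x0 s 0 == a)%:R * (nth x0 s l == a)%:R *
  walk_weight x0 (pos_weight S e l) (edge_weight e) 0 s.
Proof.
move=> l0; rewrite /walk_weight size_tuple /endpoint_weight big_split /= mulrA.
congr (_ * _); rewrite mulrC; congr (_ * _).
rewrite (prod_pick _ (ltn0Sn l)) eqxx /= (prod_pick _ (ltnSn l)) eqxx orbT.
rewrite (_ : (l == 0)%N = false); last by apply/negbTE; lia.
rewrite big1 ?mulr1 // => j _; case: ifP => // /negbT jl; case: ifP => // /negbT j0.
by rewrite (negbTE j0) (negbTE jl).
Qed.

Lemma closed_walk_mass (x0 : T) l : (1 < l)%N ->
  \sum_(s : l.+1.-tuple T)
    (nth x0 s 0 == nth x0 s l)%:R * walk_weight x0 (pos_weight S e l) (edge_weight e) 0 s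
  <= D%:R^-1 * degree_mass S e.
Proof.
move=> l1; have l0 : (0 < l)%N by lia.
rewrite (eq_bigr (fun s : l.+1.-tuple T => \sum_a
    walk_weight x0 (endpoint_weight l a) (edge_weight e) 0 s)); last first.
  move=> s _; under eq_bigr do rewrite walk_weight_endpoint //.
  rewrite -mulr_suml; congr (_ * _).
  rewrite (bigD1 (nth x0 s 0)) //= big1 ?addr0; first by rewrite eqxx mul1r eq_sym.
  by move=> a /negbTE; rewrite eq_sym => ->; rewrite mul0r.
rewrite exchange_big /degree_mass mulr_sumr; apply: ler_sum => a _.
by rewrite sum_walk_weight; apply: transfer_closed.
Qed.

(* Weights of the walks with a hole at position i: the vertex at i is forced
   to be x0 and the two steps around it are free. *)
Definition hole_weight (l : nat) (x0 : T) (i : nat) (j : nat) (x : T) : rat :=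
  if j == i then (x == x0)%:R else pos_weight S e l j x.

Definition hole_edge (i : nat) (j : nat) (x y : T) : rat :=
  if (j == i.-1) || (j == i) then 1 else edge_weight e j x y.

Lemma hole_weight_ge0 l x0 i j x : 0 <= hole_weight l x0 i j x.
Proof. by rewrite /hole_weight; case: ifP => _; [exact: ler0n | exact: pos_weight_ge0]. Qed.

Lemma hole_edge_ge0 i j x y : 0 <= hole_edge i j x y.
Proof. by rewrite /hole_edge; case: ifP => _; [exact: ler01 | exact: edge_weight_ge0]. Qed.

(* From the hole on, the free step lands anywhere in S. *)
Lemma transfer_at_hole l x0 i : (1 <= i < l)%N ->
  forall lr x, (i + lr = l)%N ->
  transfer (hole_weight l x0 i) (hole_edge i) i lr x = (x == x0)%:R * #|S|%:R.
Proof.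
move=> /andP [i1 il] [|lr] x ol; first lia.
rewrite /= {1}/hole_weight eqxx; congr (_ * _); rewrite -sum_indicator.
apply: eq_bigr => y _; rewrite /hole_edge eqxx orbT mul1r.
apply: (transfer_suffix D_gt0 min_deg (l := l) (m := i.+1)) => //; try lia.
- by move=> j z ij; rewrite /hole_weight ifF //; apply/negbTE; lia.
- by move=> j z w ij; rewrite /hole_edge ifF //; apply/negbTE; lia.
Qed.

(* Before the hole, each interior step still costs at most 1/D relative to the
   degree, and the free step into the hole costs |S|/D in total. *)
Lemma transfer_before_hole l x0 i : (1 <= i < l)%N ->
  forall lr o x, (1 <= o)%N -> (o < i)%N -> (o + lr = l)%N ->
  transfer (hole_weight l x0 i) (hole_edge i) o lr x <=
  D%:R^-1 * #|S|%:R * (x \in S)%:R.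
Proof.
move=> il; elim=> [|lr IH] o x o1 oi ol; first lia.
have ol' : (0 < o < l)%N by apply/andP; split; lia.
rewrite /= {1}/hole_weight ifF; last by apply/negbTE; lia.
have [oi'|/eqP oi'] := eqVneq o.+1 i.
  rewrite (eq_bigr (fun y => (y == x0)%:R * #|S|%:R)); last first.
    move=> y _; rewrite /hole_edge (_ : o == i.-1) /= ?mul1r; last by apply/eqP; lia.
    by rewrite -oi' (transfer_at_hole _ (i := o.+1)) -?oi' //; lia.
  rewrite -mulr_suml /= (bigD1 x0) //= big1 ?addr0 ?eqxx ?mul1r; last by move=> y /negbTE ->.
  rewrite mulrAC; apply: ler_wpM2r; first exact: ler0n.
  exact: pos_weight_interior_le.
apply: le_trans (_ : pos_weight S e l o x *
                     (D%:R^-1 * #|S|%:R * (deg S e x)%:R) <= _).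
  apply: ler_wpM2l; first exact: pos_weight_ge0.
  rewrite (eq_bigr (fun y => edge_weight e o x y *
            transfer (hole_weight l x0 i) (hole_edge i) o.+1 lr y)); last first.
    by move=> y _; rewrite /hole_edge ifF //; apply/negbTE; lia.
  apply: sum_edge_weight_le => y.
    exact: (transfer_ge0 (@hole_weight_ge0 l x0 i) (@hole_edge_ge0 i)).
  by apply: IH; lia.
by rewrite mulrCA (pos_weight_interior D_gt0 min_deg).
Qed.

Lemma hole_mass l x0 i : (1 <= i < l)%N ->
  \sum_x transfer (hole_weight l x0 i) (hole_edge i) 0 l x <=
  D%:R^-1 * #|S|%:R * degree_mass S e.
Proof.
move=> /andP [i1 il]; rewrite /degree_mass mulr_sumr; apply: ler_sum => x _.
case: l il => [|l] il //=.
rewrite {1}/hole_weight ifF ?pos_weight_start; last by apply/negbTE; lia.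
have [i1'|/eqP i1'] := eqVneq i 1%N.
  rewrite {}i1' in il *.
  rewrite (eq_bigr (fun y => (y == x0)%:R * #|S|%:R)); last first.
    move=> y _; rewrite {1}/hole_edge /= mul1r.
    by apply: transfer_at_hole => //; lia.
  rewrite -mulr_suml /= (bigD1 x0) //= big1 ?addr0 ?eqxx ?mul1r; last by move=> y /negbTE ->.
  case xS: (x \in S); last by rewrite !mul0r mulr0.
  rewrite /= !mul1r mulrAC -[X in X <= _]mul1r.
  by apply: ler_wpM2r; [exact: ler0n | exact: deg_ratio_ge1].
apply: le_trans (_ : (x \in S)%:R * (D%:R^-1 * #|S|%:R * (deg S e x)%:R) <= _);
  last by rewrite mulrCA.
apply: ler_wpM2l; first exact: ler0n.
rewrite (eq_bigr (fun y => edge_weight e 0 x y *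
          transfer (hole_weight l.+1 x0 i) (hole_edge i) 1 l y)); last first.
  by move=> y _; rewrite /hole_edge ifF //; apply/negbTE; lia.
apply: sum_edge_weight_le => y.
  exact: (transfer_ge0 (@hole_weight_ge0 l.+1 x0 i) (@hole_edge_ge0 i)).
by apply: transfer_before_hole => //; [apply/andP; split | ]; lia.
Qed.

End WeightBounds.

Section TupleSet.
Variable T : Type.

Definition tuple_set k (s : k.-tuple T) (i : 'I_k) (v : T) : k.-tuple T :=
  [tuple (if j == i then v else tnth s j) | j < k].

Lemma tnth_tuple_set k (s : k.-tuple T) i v j :
  tnth (tuple_set s i v) j = if j == i then v else tnth s j.
Proof. by rewrite /tuple_set tnth_mktuple. Qed.

Lemma nth_tuple_set (x0 : T) k (s : k.-tuple T) (i : 'I_k) v j :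
  nth x0 (tuple_set s i v) j = if j == i then v else nth x0 s j.
Proof.
case: (ltnP j k) => jk; last first.
  rewrite !nth_default ?size_tuple // ifF //; apply/negbTE; have := ltn_ord i; lia.
have -> : nth x0 (tuple_set s i v) j = tnth (tuple_set s i v) (Ordinal jk).
  by rewrite (tnth_nth x0).
by rewrite tnth_tuple_set (tnth_nth x0) -val_eqE.
Qed.

Lemma tuple_set_twice k (s : k.-tuple T) i v v' :
  tuple_set (tuple_set s i v) i v' = tuple_set s i v'.
Proof. by apply: eq_from_tnth => j; rewrite !tnth_tuple_set; case: eqP. Qed.

End TupleSet.

Definition interior k (i : 'I_k) : bool := (1 <= i) && (i.+2 <= k).

Definition tuple_rich (T : finType) k (beta : nat) (Q : {set k.-tuple T}) : Prop :=
  forall s, s \in Q -> forall i : 'I_k, interior i ->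
    beta <= #|[set v | tuple_set s i v \in Q]|.

(* As
   long as Q is not beta-rich we delete a whole class of fewer than beta
   tuples that agree off some interior position; the deleted weight is
   charged to a budget indexed by these classes.  If the budget is smaller
   than the total weight, the process stops at a nonempty beta-rich family. *)
Section Deletion.
Local Open Scope ring_scope.
Variables (T : finType) (k : nat) (x0 : T) (beta : nat) (c0 : rat).
Variables (w : k.-tuple T -> rat) (rest : 'I_k -> k.-tuple T -> rat)
  (phiI : 'I_k -> T -> rat).
Hypothesis c0_ge0 : 0 <= c0.
Hypothesis phiI_le : forall i v, phiI i v <= c0.
Hypothesis rest_ge0 : forall i s, 0 <= rest i s.
Hypothesis w_factor : forall i s v, interior i -> w (tuple_set s i v) = phiI i v * rest i s.
Hypothesis rest_set : forall i s v, rest i (tuple_set s i v) = rest i s.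

Definition mass (Q : {set k.-tuple T}) : rat := \sum_(s in Q) w s.

(* Each class (the tuples of Q with a given hole at i) may cost up to
   (beta - 1) c0 times its rest weight. *)
Definition cost : rat := (beta.-1)%:R * c0.

Definition budget (Q : {set k.-tuple T}) : rat :=
  \sum_(i : 'I_k | interior i) cost *
    \sum_(c in [set tuple_set s i x0 | s in Q]) rest i c.

Lemma cost_ge0 : 0 <= cost.
Proof. by apply: mulr_ge0 => //; exact: ler0n. Qed.

Lemma budget_ge0 Q : 0 <= budget Q.
Proof.
apply: sumr_ge0 => i _; apply: mulr_ge0; first exact: cost_ge0.
by apply: sumr_ge0 => c _; exact: rest_ge0.
Qed.

Lemma sum_subset_le (I : finType) (A B : {pred I}) (F : I -> rat) :
  {subset A <= B} -> (forall i, i \in B -> 0 <= F i) ->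
  \sum_(i in A) F i <= \sum_(i in B) F i.
Proof.
move=> AB F0; rewrite [X in _ <= X](bigID (mem A)) /=.
rewrite [X in _ <= X + _](eq_bigl (mem A)); last first.
  by move=> i; rewrite [RHS]/= andbC; case iA: (i \in A) => //=; apply: AB.
rewrite -[X in X <= _]addr0 lerD //; apply: sumr_ge0 => i /andP [iB _]; exact: F0.
Qed.

Section OneDeletion.
Variables (Q : {set k.-tuple T}) (s : k.-tuple T) (i : 'I_k).
Hypotheses (sQ : s \in Q) (ii : interior i).

Let C := [set u in Q | tuple_set u i x0 == tuple_set s i x0].

Lemma class_member u : u \in C -> u = tuple_set s i (tnth u i).
Proof.
rewrite inE => /andP [_ /eqP H]; apply: eq_from_tnth => j.
rewrite tnth_tuple_set; case: eqP => [->//|/eqP ji].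
by have := congr1 (fun t => tnth t j) H; rewrite /= !tnth_tuple_set (negbTE ji).
Qed.

Lemma class_mass_le : (#|[set v | tuple_set s i v \in Q]| < beta)%N ->
  mass C <= cost * rest i s.
Proof.
move=> small.
have cardC : (#|C| <= beta.-1)%N.
  have -> : C = [set tuple_set s i v | v in [set v | tuple_set s i v \in Q]].
    apply/setP => u; apply/idP/imsetP => [uC|[v]].
      exists (tnth u i); last exact: class_member.
      by rewrite inE -class_member //; move: uC; rewrite inE => /andP [].
    by rewrite inE => vQ ->; rewrite inE vQ tuple_set_twice eqxx.
  by apply: leq_trans (leq_imset_card _ _) _; lia.
apply: le_trans (_ : \sum_(u in C) c0 * rest i s <= _).
  apply: ler_sum => u uC; rewrite (class_member uC) w_factor //.
  by apply: ler_wpM2r.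
rewrite sumr_const -mulr_natl mulrA /cost; apply: ler_wpM2r; first exact: rest_ge0.
by apply: ler_wpM2r => //; rewrite ler_nat.
Qed.

Lemma budget_drop : budget (Q :\: C) + cost * rest i s <= budget Q.
Proof.
rewrite /budget (bigD1 i) //= [X in _ <= X](bigD1 i) //= addrAC.
have sub (j : 'I_k) : {subset [set tuple_set u j x0 | u in Q :\: C] <=
                              [set tuple_set u j x0 | u in Q]}.
  by move=> c /imsetP [u]; rewrite inE => /andP [_ uQ] ->; apply: imset_f.
apply: lerD; last first.
  apply: ler_sum => j _; apply: ler_wpM2l; first exact: cost_ge0.
  by apply: sum_subset_le (sub j) _ => c _; exact: rest_ge0.
rewrite -mulrDr; apply: ler_wpM2l; first exact: cost_ge0.
have sC : tuple_set s i x0 \in [set tuple_set u i x0 | u in Q] by apply: imset_f.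
rewrite [X in _ <= X](bigD1 (tuple_set s i x0)) //= rest_set addrC lerD //.
apply: sum_subset_le => [c|c _]; last exact: rest_ge0.
case/imsetP => u; rewrite !inE => /andP [H uQ] ->.
by rewrite unfold_in /= (imset_f (fun t => tuple_set t i x0) uQ) /=; move: H; rewrite uQ.
Qed.

Lemma deletion_step : (#|[set v | tuple_set s i v \in Q]| < beta)%N ->
  budget Q < mass Q -> budget (Q :\: C) < mass (Q :\: C).
Proof.
move=> small hQ.
have split_mass : mass Q = mass (Q :\: C) + mass C.
  rewrite /mass (big_setID C) /= addrC; congr (_ + _).
  apply: eq_bigl => u; rewrite inE; case uC: (u \in C); last by rewrite andbF.
  by move: uC; rewrite inE => /andP [->].
have := class_mass_le small; have := budget_drop; move: hQ; rewrite split_mass.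
lra.
Qed.

Lemma class_nonempty : (#|Q :\: C| < #|Q|)%N.
Proof.
apply: proper_card; apply/properP; split; first exact: subsetDl.
by exists s => //; rewrite !inE sQ eqxx.
Qed.

End OneDeletion.

Lemma nonempty_of_budget_lt_mass Q : budget Q < mass Q -> Q != set0.
Proof. by apply: contraTneq => ->; rewrite /mass big_set0 ltNge budget_ge0. Qed.

Lemma deletion (Q : {set k.-tuple T}) : budget Q < mass Q ->
  exists2 Q' : {set k.-tuple T}, Q' \subset Q & Q' != set0 /\ tuple_rich beta Q'.
Proof.
move: {2}#|Q| (leqnn #|Q|) => n; elim: n Q => [|n IH] Q cardQ hQ.
  by have := nonempty_of_budget_lt_mass hQ; rewrite -cards_eq0 -leqn0 cardQ.
case: (boolP [forall s in Q, forall i : 'I_k,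
                interior i ==> (beta <= #|[set v | tuple_set s i v \in Q]|)%N]).
  move/forall_inP => rich; exists Q => //; split; first exact: nonempty_of_budget_lt_mass.
  by move=> s sQ i ii; move/forallP: (rich s sQ) => /(_ i); rewrite ii.
move/forall_inPn => [s sQ /forallPn [i]]; rewrite negb_imply -ltnNge => /andP [ii small].
have [Q' sub Q'P] := IH _ (leq_trans (class_nonempty i sQ) cardQ)
                         (deletion_step sQ ii small hQ).
by exists Q' => //; apply: subset_trans sub (subsetDl _ _).
Qed.

End Deletion.

(* Random walks with l steps in a subgraph of minimum degree D, as tuples:
   those of positive weight and distinct endpoints carry almost all of the
   weight, while the deletion budget is small, so a nonempty beta-rich family
   of such walks survives the deletion argument. *)
Section RichWalks.
Local Open Scope ring_scope.
Variables (T : finType) (S : {set T}) (e : rel T) (D : nat) (x0 : T) (l : nat).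
Hypothesis D_gt0 : (0 < D)%N.
Hypothesis min_deg : forall x, x \in S -> (D <= deg S e x)%N.

Definition walk_tuple_weight (s : l.+1.-tuple T) : rat :=
  walk_weight x0 (pos_weight S e l) (edge_weight e) 0 s.

Definition vertex_weight (s : l.+1.-tuple T) : rat :=
  \prod_(0 <= j < l.+1) pos_weight S e l j (nth x0 s j).

Definition rest_weight (i : 'I_l.+1) (s : l.+1.-tuple T) : rat :=
  \prod_(0 <= j < l.+1) (if j == i then 1 else pos_weight S e l j (nth x0 s j)).

Definition adjacency_weight (s : l.+1.-tuple T) : rat :=
  \prod_(0 <= j < l) edge_weight e j (nth x0 s j) (nth x0 s j.+1).

Lemma walk_tuple_weight_split s :
  walk_tuple_weight s = vertex_weight s * adjacency_weight s.
Proof. by rewrite /walk_tuple_weight /walk_weight size_tuple. Qed.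

Lemma walk_tuple_weight_ge0 s : 0 <= walk_tuple_weight s.
Proof. exact: walk_weight_ge0 (@pos_weight_ge0 T S e l) (@edge_weight_ge0 T e). Qed.

Lemma walk_of_weight_neq0 s : walk_tuple_weight s != 0 ->
  (forall j, (j < l)%N -> e (nth x0 s j) (nth x0 s j.+1)) /\ adjacency_weight s = 1.
Proof.
rewrite walk_tuple_weight_split mulf_eq0 negb_or => /andP [_].
rewrite /adjacency_weight prodf_seq_neq0 => /allP adj.
have Hwalk j : (j < l)%N -> e (nth x0 s j) (nth x0 s j.+1).
  move=> jl; have := adj j; rewrite mem_iota subn0 add0n leq0n jl /edge_weight => /(_ isT).
  by case: (e _ _).
split => //; rewrite big_nat big1 // => j /andP [_ jl].
by rewrite /edge_weight Hwalk.
Qed.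

Lemma vertex_weight_set s i v :
  vertex_weight (tuple_set s i v) = pos_weight S e l i v * rest_weight i s.
Proof.
rewrite /vertex_weight (prod_pick _ (ltn_ord i)) nth_tuple_set eqxx; congr (_ * _).
by apply: eq_bigr => j _; rewrite nth_tuple_set; case: eqP.
Qed.

Lemma rest_weight_set s i v : rest_weight i (tuple_set s i v) = rest_weight i s.
Proof. by apply: eq_bigr => j _; rewrite nth_tuple_set; case: eqP. Qed.

Lemma rest_weight_ge0 i s : 0 <= rest_weight i s.
Proof. by apply: prodr_ge0 => j _; case: ifP => _ //; exact: pos_weight_ge0. Qed.

Lemma hole_walk_weight s (i : 'I_l.+1) : walk_tuple_weight s != 0 ->
  walk_weight x0 (hole_weight S e l x0 i) (hole_edge e i) 0 (tuple_set s i x0) =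
  rest_weight i (tuple_set s i x0).
Proof.
move=> /walk_of_weight_neq0 [Hwalk _]; rewrite /walk_weight size_tuple /=.
rewrite (prod_pick _ (ltn_ord i)) /hole_weight eqxx nth_tuple_set !eqxx mul1r.
rewrite [X in _ * X]big_nat [X in _ * X]big1 ?mulr1.
  by apply: eq_bigr => j _; case: ifP => // ->.
move=> j /andP [_ jl]; rewrite /hole_edge; case: ifP => // /negbT.
rewrite negb_or => /andP [j1 j2]; rewrite !nth_tuple_set (negbTE j2).
rewrite (_ : (j.+1 == i) = false); last by apply/negbTE; apply: contra j1 => /eqP <-.
by rewrite /edge_weight Hwalk.
Qed.

Definition good_walks : {set l.+1.-tuple T} :=
  [set s | (walk_tuple_weight s != 0) && (tnth s ord0 != tnth s ord_max)].

Let c0 : rat := D%:R^-1.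

Lemma good_walks_mass : (1 < l)%N ->
  degree_mass S e - c0 * degree_mass S e <= mass vertex_weight good_walks.
Proof.
move=> l1.
have total : \sum_s walk_tuple_weight s = degree_mass S e.
  rewrite /walk_tuple_weight sum_walk_weight /degree_mass; apply: eq_bigr => x _.
  exact: (transfer_from_start D_gt0 min_deg x (ltnW l1)).
have mass_good : mass vertex_weight good_walks = \sum_(s in good_walks) walk_tuple_weight s.
  apply: eq_bigr => s; rewrite inE => /andP [/walk_of_weight_neq0 [_ A1] _].
  by rewrite walk_tuple_weight_split A1 mulr1.
have bad : \sum_(s in ~: good_walks) walk_tuple_weight s <=
           \sum_(s : l.+1.-tuple T) (nth x0 s 0 == nth x0 s l)%:R * walk_tuple_weight s.
  apply: le_trans (_ : \sum_(s in ~: good_walks)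
                         (nth x0 s 0 == nth x0 s l)%:R * walk_tuple_weight s <= _).
    apply: ler_sum => s; rewrite !inE negb_and !negbK => /orP [/eqP ->|H].
      by rewrite mulr0.
    have -> : nth x0 s 0 == nth x0 s l by move: H; rewrite !(tnth_nth x0).
    by rewrite mul1r.
  apply: sum_subset_le => // s _.
  by apply: mulr_ge0; [exact: ler0n | exact: walk_tuple_weight_ge0].
have split : \sum_s walk_tuple_weight s = \sum_(s in good_walks) walk_tuple_weight s +
                                           \sum_(s in ~: good_walks) walk_tuple_weight s.
  by rewrite (bigID (mem good_walks)) /=; congr (_ + _); apply: eq_bigl => s; rewrite !inE.
have := le_trans bad (closed_walk_mass D_gt0 min_deg x0 l1).
move: split; rewrite mass_good total /c0; lra.
Qed.

Lemma good_walks_budget beta : (1 < l)%N -> 0 < degree_mass S e ->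
  budget x0 beta c0 rest_weight good_walks <=
  (l.+1)%:R * cost beta c0 * (c0 * #|S|%:R * degree_mass S e).
Proof.
move=> l1 E0; have c0_ge0 : 0 <= c0 by rewrite invr_ge0 ler0n.
have cost0 := cost_ge0 beta c0_ge0.
set share := c0 * #|S|%:R * degree_mass S e.
have share0 : 0 <= share.
  by apply: mulr_ge0; [apply: mulr_ge0; [|exact: ler0n] | exact: ltW].
apply: le_trans (_ : \sum_(i : 'I_l.+1 | interior i) cost beta c0 * share <= _).
  apply: ler_sum => i /andP [i1 i2]; apply: ler_wpM2l => //.
  rewrite (eq_bigr (fun c : l.+1.-tuple T =>
            walk_weight x0 (hole_weight S e l x0 i) (hole_edge e i) 0 c)); last first.
    by move=> c /imsetP [s]; rewrite inE => /andP [H _] ->; rewrite hole_walk_weight.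
  apply: le_trans (_ : \sum_(c : l.+1.-tuple T)
                         walk_weight x0 (hole_weight S e l x0 i) (hole_edge e i) 0 c <= _).
    apply: sum_subset_le => // c _.
    by apply: walk_weight_ge0; [exact: hole_weight_ge0 | exact: hole_edge_ge0].
  by rewrite sum_walk_weight; apply: hole_mass => //; apply/andP; split.
rewrite big_mkcond /=.
apply: le_trans (_ : \sum_(i : 'I_l.+1) cost beta c0 * share <= _).
  by apply: ler_sum => i _; case: ifP => // _; apply: mulr_ge0.
by rewrite sumr_const card_ord -[_ *+ l.+1]mulr_natl mulrA.
Qed.

Lemma rich_walks beta : (1 < l)%N -> 0 < degree_mass S e ->
  (l.+1 * beta.-1 * #|S| + D < D * D)%N ->
  exists Q : {set l.+1.-tuple T}, [/\ Q != set0, tuple_rich beta Q,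
    forall s, s \in Q -> forall j, (j < l)%N -> e (nth x0 s j) (nth x0 s j.+1) &
    forall s, s \in Q -> tnth s ord0 != tnth s ord_max].
Proof.
move=> l1 E0 hnum; have c0_ge0 : 0 <= c0 by rewrite invr_ge0 ler0n.
have Dp : 0 < D%:R :> rat by rewrite ltr0n.
have small : (l.+1 * beta.-1 * #|S|)%:R * (c0 * c0) < 1 - c0.
  have -> : 1 - c0 = (D%:R * D%:R - D%:R) * (c0 * c0).
    by rewrite /c0; field; rewrite lt0r_neq0.
  rewrite ltr_pM2r ?mulr_gt0 ?invr_gt0 // -natrM ltrBrDr -natrD ltr_nat.
  by rewrite ltnNge leq_eqVlt negb_or ltnNge -ltnNge; lia.
have [Q sub [Qne Qrich]] : exists2 Q : {set l.+1.-tuple T}, Q \subset good_walks & Q != set0 /\ tuple_rich beta Q.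
  apply: (@deletion T l.+1 x0 beta c0 vertex_weight rest_weight
            (fun i v => if interior i then pos_weight S e l i v else 0)) => //.
  - move=> i v; case: ifP => // /andP [i1 i2].
    apply: le_trans (pos_weight_interior_le D_gt0 min_deg v (j := i) _) _.
      by apply/andP; split.
    by rewrite -[X in _ <= X]mulr1; apply: ler_wpM2l => //; case: (v \in S).
  - exact: rest_weight_ge0.
  - by move=> i s v ii; rewrite ii vertex_weight_set.
  - by move=> i s v; exact: rest_weight_set.
  apply: le_lt_trans (good_walks_budget beta l1 E0) _.
  apply: lt_le_trans (good_walks_mass l1); rewrite /cost.
  move: small; rewrite !natrM -(ltr_pM2r E0); nra.
exists Q; split => // s /(subsetP sub); rewrite inE => /andP [H ends] //.
by case: (walk_of_weight_neq0 H).
Qed.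

End RichWalks.

Lemma degree_mass_gt0 (T : finType) (S : {set T}) (e : rel T) (D : nat) :
  (0 < D)%N -> (forall x, x \in S -> (D <= deg S e x)%N) -> S != set0 ->
  (0 < degree_mass S e)%R.
Proof.
move=> D_gt0 min_deg /set0Pn [y yS]; rewrite /degree_mass (bigD1 y) //= yS mul1r.
apply: Num.Theory.ltr_wpDr; last by rewrite ltr0n (leq_trans D_gt0 (min_deg y yS)).
by apply: sumr_ge0 => i _; apply: mulr_ge0; exact: ler0n.
Qed.

(* Replacing an
   interior entry by one of the at least beta admissible values avoids the
   other entries of the tuple whenever beta exceeds their number; this both
   produces a walk without repeated vertices and shows that the paths of a
   beta-rich family form a (beta - (k - 1))-rich family. *)
Section RichPaths.
Variable T : finType.

Definition other_entries k (s : k.-tuple T) (i : 'I_k) : {set T} := (tnth s) @: [set~ i].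

Lemma other_entries_card k (s : k.-tuple T) i : #|other_entries s i| <= k.-1.
Proof. by apply: leq_trans (leq_imset_card _ _) _; rewrite cardsC1 card_ord. Qed.

Lemma other_entries_set k (s : k.-tuple T) i v :
  other_entries (tuple_set s i v) i = other_entries s i.
Proof.
by apply: eq_in_imset => j; rewrite !inE => ji; rewrite tnth_tuple_set (negbTE ji).
Qed.

Lemma entries_split k (s : k.-tuple T) i :
  (tnth s) @: setT = tnth s i |: other_entries s i.
Proof.
have -> : [set: 'I_k] = i |: [set~ i] by apply/setP => j; rewrite !inE; case: eqP.
by rewrite imsetU1.
Qed.

Lemma uniq_tuple_set k (s : k.-tuple T) i v :
  uniq s -> v \notin other_entries s i -> uniq (tuple_set s i v).
Proof.
move=> /tuple_uniqP inj vO; apply/tuple_uniqP => j1 j2; rewrite !tnth_tuple_set.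
have other j : j != i -> tnth s j \in other_entries s i.
  by move=> ji; apply: imset_f; rewrite !inE.
case: eqP => [->|/eqP j1i]; case: eqP => [->//|/eqP j2i].
- by move=> E; move: vO; rewrite E other.
- by move=> E; move: vO; rewrite -E other.
- exact: inj.
Qed.

Lemma fresh_values k beta (Q : {set k.-tuple T}) s i :
  tuple_rich beta Q -> s \in Q -> interior i ->
  beta - k.-1 <= #|[set v | tuple_set s i v \in Q] :\: other_entries s i|.
Proof.
move=> rich sQ ii; rewrite cardsD; have := rich s sQ i ii.
have := other_entries_card s i.
have : #|[set v | tuple_set s i v \in Q] :&: other_entries s i| <= #|other_entries s i|.
  by apply: subset_leq_card; apply: subsetIr.
lia.
Qed.

Lemma rich_uniq k beta (Q : {set k.-tuple T}) :
  tuple_rich beta Q -> tuple_rich (beta - k.-1) [set s in Q | uniq s].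
Proof.
move=> rich s; rewrite inE => /andP [sQ us] i ii.
apply: leq_trans (fresh_values rich sQ ii) _.
apply: subset_leq_card; apply/subsetP => v; rewrite !inE => /andP [vO vQ].
by rewrite vQ uniq_tuple_set.
Qed.

Lemma repeat_at_interior l (s : l.+1.-tuple T) :
  ~~ uniq s -> tnth s ord0 != tnth s ord_max ->
  exists i j : 'I_l.+1, [/\ interior i, i != j & tnth s i = tnth s j].
Proof.
move=> nus ends.
have [j1 [j2 [j12 e12]]] : exists j1 j2 : 'I_l.+1, j1 != j2 /\ tnth s j1 = tnth s j2.
  case: (boolP [exists j1, exists j2, (j1 != j2) && (tnth s j1 == tnth s j2)]).
    by move=> /existsP [j1 /existsP [j2 /andP [H /eqP E]]]; exists j1, j2.
  move=> H; case/negP: nus; apply/tuple_uniqP => j1 j2 E.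
  apply/eqP; apply: contraNT H => H; apply/existsP; exists j1; apply/existsP; exists j2.
  by rewrite H E eqxx.
have end_pos (j : 'I_l.+1) : ~~ interior j -> j = ord0 \/ j = ord_max.
  case: j => [[|m] Hm] Hj; [left | right]; apply/val_inj => //=.
  by move: Hj; rewrite /interior /=; lia.
case: (boolP (interior j1)) => i1; first by exists j1, j2.
case: (boolP (interior j2)) => i2; first by exists j2, j1; rewrite eq_sym.
have [E1|E1] := end_pos _ i1; have [E2|E2] := end_pos _ i2; rewrite E1 E2 in j12 e12.
- by rewrite eqxx in j12.
- by move: ends; rewrite e12 eqxx.
- by move: ends; rewrite e12 eqxx.
- by rewrite eqxx in j12.
Qed.

(* In a beta-rich family of tuples with distinct endpoints and beta > k - 1,
   some tuple has no repeated entry: replacing a repeated interior entry by a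
   fresh admissible value increases the number of distinct entries. *)
Lemma exists_uniq_tuple l beta (Q : {set l.+1.-tuple T}) s :
  l < beta -> tuple_rich beta Q ->
  (forall s, s \in Q -> tnth s ord0 != tnth s ord_max) ->
  s \in Q -> exists2 s', s' \in Q & uniq s'.
Proof.
move=> lb rich ends sQ.
suff H n s' : s' \in Q -> l.+1 - #|(tnth s') @: setT| = n -> exists2 u, u \in Q & uniq u.
  exact: H _ s sQ erefl.
move=> {sQ s}; elim/ltn_ind: n s' => n IH s sQ hn.
case: (boolP (uniq s)) => [us|nus]; first by exists s.
have [i [j [ii ij eij]]] := repeat_at_interior nus (ends s sQ).
have [v vQ vO] : exists2 v, tuple_set s i v \in Q & v \notin other_entries s i.
  have : 0 < #|[set v | tuple_set s i v \in Q] :\: other_entries s i|.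
    by apply: leq_trans (fresh_values rich sQ ii); rewrite subn_gt0.
  by case/card_gt0P => v; rewrite !inE => /andP [vO vQ]; exists v.
have iO : tnth s i \in other_entries s i by rewrite eij; apply: imset_f; rewrite !inE eq_sym.
have c1 : #|(tnth s) @: setT| = #|other_entries s i|.
  by rewrite (entries_split s i) cardsU1 iO.
have c2 : #|(tnth (tuple_set s i v)) @: setT| = #|other_entries s i|.+1.
  by rewrite (entries_split _ i) other_entries_set tnth_tuple_set eqxx cardsU1 vO.
have := other_entries_card s i; rewrite /= => oc.
by apply: (IH _ _ (tuple_set s i v) vQ erefl); rewrite c2 -hn c1; lia.
Qed.

Definition tuple_path k (s : k.-tuple T) : {ffun 'I_k -> T} := [ffun j => tnth s j].

Lemma tuple_path_set k (s : k.-tuple T) i v :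
  replace_at (tuple_path s) i v = tuple_path (tuple_set s i v).
Proof. by apply/ffunP => j; rewrite !ffunE tnth_tuple_set. Qed.

Lemma rich_paths_of_rich_walks (e : rel T) (x0 : T) l alpha (Q : {set l.+1.-tuple T}) :
  Q != set0 -> tuple_rich (alpha + l.+1) Q ->
  (forall s, s \in Q -> forall j, j < l -> e (nth x0 s j) (nth x0 s j.+1)) ->
  (forall s, s \in Q -> tnth s ord0 != tnth s ord_max) ->
  exists P : {set {ffun 'I_l.+1 -> T}},
    P != set0 /\ (forall p, p \in P -> is_gpath e p) /\ rich alpha P.
Proof.
move=> Qne Qrich walks ends; set Qu := [set s in Q | uniq s].
exists [set tuple_path s | s in Qu]; split; [|split].
- case/set0Pn: Qne => s sQ.
  have [s' s'Q us'] := exists_uniq_tuple (leq_addl alpha l.+1) Qrich ends sQ.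
  by apply/set0Pn; exists (tuple_path s'); apply: imset_f; rewrite inE s'Q.
- move=> p /imsetP [s]; rewrite inE => /andP [sQ us] ->; apply/andP; split.
    by apply/injectiveP => i j; rewrite !ffunE; exact: (tuple_uniqP _ us).
  apply/forallP => i; apply/forallP => j; apply/implyP => /eqP ji; rewrite !ffunE.
  by rewrite !(tnth_nth x0) ji; apply: walks => //; have := ltn_ord j; lia.
- move=> p /imsetP [s sQu ->] i i1 i2.
  have := rich_uniq Qrich sQu (i := i); rewrite /interior i1 i2 => /(_ isT).
  rewrite -addSnnS addnK => Hcard; apply: leq_trans (leq_trans (leqnSn _) Hcard) _.
  apply: subset_leq_card; apply/subsetP => v; rewrite inE [in X in _ -> X]inE.
  by rewrite tuple_path_set; apply: imset_f.
Qed.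

End RichPaths.

Section DenseCore.
Variables (T : finType) (e : rel T).
Hypotheses (e_sym : symmetric e) (e_irr : irreflexive e).

Definition adj_pairs (S : {set T}) : nat := \sum_(y in S) deg S e y.

Lemma deg_sum (S : {set T}) (y : T) : deg S e y = \sum_(z in S) e y z.
Proof.
rewrite /deg -sum1_card big_mkcond [RHS]big_mkcond /=; apply: eq_bigr => z _.
by rewrite inE; case: (z \in S); case: (e y z).
Qed.

Lemma deg_remove (S : {set T}) (x y : T) : x \in S -> deg S e y = e y x + deg (S :\ x) e y.
Proof.
move=> xS; rewrite !deg_sum (bigD1 x) //=; congr (_ + _).
by apply: eq_bigl => z; rewrite !inE andbC.
Qed.

Lemma adj_pairs_remove (S : {set T}) (x : T) : x \in S -> adj_pairs S = adj_pairs (S :\ x) + 2 * deg S e x.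
Proof.
move=> xS; rewrite /adj_pairs (bigD1 x) //=.
have -> : \sum_(y in S | y != x) deg S e y =
          \sum_(y in S :\ x) e x y + \sum_(y in S :\ x) deg (S :\ x) e y.
  rewrite -big_split /=; apply: eq_big => [y|y _]; first by rewrite !inE andbC.
  by rewrite (deg_remove _ xS) e_sym.
have -> : \sum_(y in S :\ x) e x y = deg S e x.
  rewrite deg_sum [RHS](bigD1 x) //= e_irr add0n.
  by apply: eq_bigl => z; rewrite !inE andbC.
lia.
Qed.

Lemma adj_pairs_setT : adj_pairs setT = #|[set p : T * T | e p.1 p.2]|.
Proof.
rewrite /adj_pairs (eq_bigl xpredT); last by move=> y; rewrite in_setT.
rewrite (eq_bigr (fun y => \sum_z (e y z : nat))); last first.
  by move=> y _; rewrite deg_sum; apply: eq_bigl => z; rewrite in_setT.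
rewrite pair_bigA /= -sum1_card [RHS]big_mkcond /=; apply: eq_bigr => p _.
by rewrite inE; case: (e p.1 p.2).
Qed.

(* Maximizing adj_pairs A + (2D - 1)(n - |A|) over all vertex sets A gives a
   set S in which every vertex has degree at least D: removing a vertex of
   smaller degree would increase the objective.  S is nonempty since the whole
   vertex set scores more than the empty set. *)
Lemma dense_core D : 0 < D -> 0 < #|T| -> 2 * D * #|T| <= adj_pairs setT ->
  exists2 S : {set T}, S != set0 & forall x, x \in S -> D <= deg S e x.
Proof.
move=> D_gt0 n_gt0 dense.
pose score (A : {set T}) := adj_pairs A + (2 * D - 1) * (#|T| - #|A|).
case: (@arg_maxnP _ setT xpredT score erefl) => S _ Smax.
exists S.
  apply/set0Pn; case: (set_0Vmem S) => [S0|[x xS]]; last by exists x.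
  have := Smax setT erefl; rewrite /score S0 cards0 cardsT subn0 subnn muln0 addn0.
  have -> : adj_pairs set0 = 0 by rewrite /adj_pairs big_set0.
  by move: dense; nia.
move=> x xS; rewrite leqNgt; apply/negP => small.
have := Smax (S :\ x) erefl; rewrite /score (adj_pairs_remove xS).
have := cardsD1 x S; rewrite xS; have := max_card S.
move: (adj_pairs (S :\ x)) (deg S e x) #|S :\ x| #|S| #|T| small; nia.
Qed.

End DenseCore.

Lemma rich_paths_in_dense_graph (T : finType) (e : rel T) l alpha D :
  symmetric e -> irreflexive e -> 1 < l -> 0 < D -> 0 < #|T| ->
  2 * D * #|T| <= #|[set p : T * T | e p.1 p.2]| ->
  l.+1 * (alpha + l) * #|T| + D < D * D ->
  exists P : {set {ffun 'I_l.+1 -> T}},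
    P != set0 /\ (forall p, p \in P -> is_gpath e p) /\ rich alpha P.
Proof.
move=> e_sym e_irr l1 D_gt0 n_gt0 dense hnum.
rewrite -adj_pairs_setT in dense.
have [S Sne min_deg] := dense_core e_sym e_irr D_gt0 n_gt0 dense.
have [x0 _] := set0Pn _ Sne.
have numS : l.+1 * (alpha + l.+1).-1 * #|S| + D < D * D.
  by apply: leq_ltn_trans hnum; rewrite addnS leq_add2r leq_mul2l max_card orbT.
have [Q [Qne Qrich walks ends]] := rich_walks x0 D_gt0 min_deg l1
  (degree_mass_gt0 D_gt0 min_deg Sne) numS.
exact: rich_paths_of_rich_walks Qne Qrich walks ends.
Qed.

Lemma density_numerics_core (t n m D : nat) :
  2 <= t -> 0 < n -> 25 * t ^ 3 * n ^ 3 <= m ^ 2 -> D * n <= m -> m < D.+1 * n ->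
  ((2 * t - 1) * (t ^ 2 + 2 * t - 2)) * n + D < D * D /\ 0 < D.
Proof.
move=> t2 n0 hm lo hi.
have sq : m ^ 2 < (D.+1 * n) ^ 2 by rewrite ltn_sqr.
have P_lt : 25 * t ^ 3 * n * (n * n) < D.+1 ^ 2 * (n * n).
  by move: hm sq; rewrite ?expnS ?expn0 ?muln1; nia.
rewrite ltn_pmul2r ?muln_gt0 ?n0 // in P_lt.
have poly : (2 * t - 1) * (t ^ 2 + 2 * t - 2) <= 5 * t ^ 3.
  by rewrite ?expnS ?expn0 ?muln1; nia.
set P := t ^ 3 * n in P_lt.
have P1 : 1 <= P by rewrite /P muln_gt0 expn_gt0; lia.
have lhs : (2 * t - 1) * (t ^ 2 + 2 * t - 2) * n <= 5 * P.
  by rewrite /P mulnA leq_mul2r poly orbT.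
move: P_lt; rewrite ?expnS ?expn0 ?muln1 => P_lt.
split; nia.
Qed.

Lemma density_numerics (t n c : nat) : 2 <= t -> 0 < n ->
  25 * t ^ 3 * n ^ 3 <= (c %/ 2) ^ 2 ->
  [/\ 0 < c %/ 2 %/ n, 2 * (c %/ 2 %/ n) * n <= c &
      (2 * t - 2).+1 * (t ^ 2 + (2 * t - 2)) * n + c %/ 2 %/ n <
      c %/ 2 %/ n * (c %/ 2 %/ n)].
Proof.
move=> t2 n0 hm; set m := c %/ 2; set D := m %/ n.
have lo : D * n <= m := leq_divM m n.
have [hnum D_gt0] := density_numerics_core t2 n0 hm lo (ltn_ceil m n0).
have half : 2 * m <= c by rewrite mulnC; exact: leq_divM.
have -> : (2 * t - 2).+1 = 2 * t - 1 by lia.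
have -> : t ^ 2 + (2 * t - 2) = t ^ 2 + 2 * t - 2 by lia.
by split => //; lia.
Qed.

(* For t = 1 a single vertex forms a path of length 0, and there are no
   interior positions to check. *)
Lemma single_vertex_paths (T : finType) (e : rel T) (x : T) alpha :
  exists P : {set {ffun 'I_1 -> T}},
    P != set0 /\ (forall p, p \in P -> is_gpath e p) /\ rich alpha P.
Proof.
exists [set [ffun _ => x]]; split; [|split].
- by apply/set0Pn; exists [ffun _ => x]; rewrite inE.
- move=> p _; apply/andP; split.
    by apply/injectiveP => i j _; rewrite (ord1 i) (ord1 j).
  apply/forallP => i; apply/forallP => j; apply/implyP => /eqP ji.
  by have := ltn_ord j; lia.
- by move=> p _ i i1 i2; have := ltn_ord i; lia.
Qed.

Theorem lemma3p6 (t : nat) : 0 < t ->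
  exists N : nat, forall (T : finType) (e : rel T),
    symmetric e -> irreflexive e -> N <= #|T| ->
    (* e(G) >= 5 t^{3/2} n^{3/2}, squared (both sides nonnegative) *)
    25 * t ^ 3 * #|T| ^ 3 <= (num_edges e) ^ 2 ->
    exists P : {set {ffun 'I_(2 * t - 1) -> T}},
      P != set0 /\ (forall p, p \in P -> is_gpath e p) /\ rich (t ^ 2) P.
Proof.
move=> t_gt0; exists 1 => T e e_sym e_irr n_gt0 dense.
have [x _] : exists x : T, x \in T by apply/card_gt0P.
have [t_lt2|t_ge2] := ltnP t 2.
  have -> : t = 1 by lia.
  exact: single_vertex_paths.
have [D_gt0 pairs numerics] := density_numerics t_ge2 n_gt0 dense.
have -> : 2 * t - 1 = (2 * t - 2).+1 by lia.
apply: rich_paths_in_dense_graph e_sym e_irr _ D_gt0 n_gt0 pairs numerics; lia.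
Qed.
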